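(* For all $m,t\in\mathbb{N}$: $R_t(m,m)=0$, $R_t(m-1,m)=1$, and $R_t(m-2,m)=\min\{t,m\}+1$.
   Context: For a $t\times n$ matrix $\mathbf{v}$ over $\mathbb{F}_2$ with rows $\overline{v}_1,\dots,\overline{v}_t$, $\mathrm{wt}^{(t)}(\mathbf{v})=\left|\bigcup_{i} \mathrm{supp}(\overline{v}_i)\right|$ and $d^{(t)}(\mathbf{u},\mathbf{v})=\mathrm{wt}^{(t)}(\mathbf{u}-\mathbf{v})$. For a linear code $C\subseteq\mathbb{F}_2^n$, $C^t$ is the set of $t\times n$ matrices all of whose rows lie in $C$, and $R_t(C)$ is the smallest integer $\rho$ such that for every $\mathbf{v}\in\mathbb{F}_2^{t\times n}$ some $\mathbf{c}\in C^t$ has $d^{(t)}(\mathbf{v},\mathbf{c})\le\rho$. Reed–Muller codes $\mathrm{RM}(r,m)\subseteq\mathbb{F}_2^{2^m}$: $\mathrm{RM}(0,m)=\{\overline{0},\overline{1}\}$, $\mathrm{RM}(m,m)=\mathbb{F}_2^{2^m}$, and for $1\leq r\leq m-1$, $\mathrm{RM}(r,m)=\{(\overline{u},\overline{u}+\overline{v}) : \overline{u}\in \mathrm{RM}(r,m-1),\ \overline{v}\in\mathrm{RM}(r-1,m-1)\}$. (In particular $\mathrm{RM}(m-1,m)$ is the even-weight code of length $2^m$ and $\mathrm{RM}(m-2,m)$ is the extended Hamming code of length $2^m$; for $m=1$, $\mathrm{RM}(m-2,m)$ is interpreted as $\{\overline{0}\}$.) $R_t(r,m)=R_t(\mathrm{RM}(r,m))$.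 *)

(* Binary vectors over F_2 are represented as bitseq
   (bool = F_2, addition = xor (+)). *)
From mathcomp Require Import all_boot all_order all_algebra.
Set Implicit Arguments. Unset Strict Implicit. Unset Printing Implicit Defensive.

Definition xorseq (u v : bitseq) : bitseq := [seq p.1 (+) p.2 | p <- zip u v].

(* RM(0,m) = {0,1}; RM(m,m) = F_2^(2^m) (r >= m gives the full space, only
   r <= m is used); for 1 <= r <= m-1,
   RM(r,m) = {(u, u+v) : u in RM(r,m-1), v in RM(r-1,m-1)}. *)
Fixpoint RM (r m : nat) (w : bitseq) : bool :=
  match m with
  | 0 => size w == 1
  | m'.+1 =>
      if r == 0 then (w == nseq (2 ^ m'.+1) false) || (w == nseq (2 ^ m'.+1) true)
      else if m'.+1 <= r then size w == 2 ^ m'.+1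
      else [&& size w == 2 ^ m'.+1,
               RM r m' (take (2 ^ m') w)
             & RM r.-1 m' (xorseq (take (2 ^ m') w) (drop (2 ^ m') w))]
  end.

(* RM(m-2,m), with RM(-1,1) interpreted as the zero code {0} of length 2. *)
Definition RM_m2 (m : nat) : pred bitseq :=
  if m == 1 then (fun w => w == [:: false; false]) else RM (m - 2) m.

Definition rowseq t n (M : 'M[bool]_(t, n)) (i : 'I_t) : bitseq :=
  [seq M i j | j <- enum 'I_n].

Definition wt_t t n (M : 'M[bool]_(t, n)) : nat :=
  #|[set j : 'I_n | [exists i : 'I_t, M i j]]|.

Definition d_t t n (U V : 'M[bool]_(t, n)) : nat :=
  wt_t (\matrix_(i, j) (U i j (+) V i j)).

Definition covers (C : pred bitseq) (t n rho : nat) : Prop :=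
  forall v : 'M[bool]_(t, n), exists c : 'M[bool]_(t, n),
    (forall i, C (rowseq c i)) /\ d_t v c <= rho.

Definition is_Rt (C : pred bitseq) (t n rho : nat) : Prop :=
  covers C t n rho /\ forall rho', covers C t n rho' -> rho <= rho'.

From mathcomp Require Import all_boot all_order all_algebra.

Set Implicit Arguments.
Unset Strict Implicit.
Unset Printing Implicit Defensive.

(* RM(m-1,m) is the even-weight code and RM(m-2,m) the extended Hamming code:
   a word lies in it iff its weight is even and, for every b < m, so is the
   number of its ones at positions whose index has bit b set.  Moving a row
   into the code amounts to flipping a set of positions with the same
   syndrome (p, x), x being the number whose bits are these parities.  That
   syndrome is realised by {x} or {0, x}, so t rows can be repaired inside
   the t + 1 positions {0, x_1, ..., x_t}; it is also realised by the 2^b with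
   bit b of x set, plus possibly 0, which stays inside {0, 1, 2, ..., 2^(m-1)}.
   Conversely, for the k = min(t, m) rows e_0 + e_(2^i), i < k, the rows of
   the difference with any codeword matrix have even weight and unit-vector
   syndromes; their F_2-combinations, plus one point of the union J of their
   supports, give 2^(k+1) distinct vectors supported in J, so |J| > k. *)

Fixpoint wparity (f : nat -> bool) (w : bitseq) : bool :=
  if w is x :: w' then (x && f 0) (+) wparity (fun j => f j.+1) w' else false.

Lemma eq_wparity f g w : {in gtn (size w), f =1 g} -> wparity f w = wparity g w.
Proof.
elim: w f g => [//|x w IHw] f g /= eq_fg.
rewrite eq_fg // (IHw _ (fun j => g j.+1)) // => j lt_j_w.
exact: eq_fg.
Qed.

Lemma wparity_cat f u v :
  wparity f (u ++ v) = wparity f u (+) wparity (fun j => f (size u + j)) v.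
Proof. by elim: u f => [|x u IHu] f //=; rewrite IHu addbA. Qed.

Lemma wparity_xor f u v : size u = size v ->
  wparity f (xorseq u v) = wparity f u (+) wparity f v.
Proof.
elim: u f v => [|x u IHu] f [|y v] //= [eq_uv].
rewrite IHu // andb_addl.
by rewrite -!addbA; congr (_ (+) _); rewrite addbCA.
Qed.

Lemma size_xorseq u v : size (xorseq u v) = minn (size u) (size v).
Proof. by rewrite size_map size_zip. Qed.

Lemma wparity_rowseq t n (M : 'M[bool]_(t, n)) i f :
  wparity f (rowseq M i) = \big[addb/false]_(j | M i j) f j.
Proof.
have wparityE g w :
    wparity g w = \big[addb/false]_(0 <= j < size w | nth false w j) g j.
  elim: w g => [|x w IHw] g; first by rewrite big_geq.
  by rewrite big_mkcond big_nat_recl //= -big_mkcond -IHw.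
rewrite wparityE size_map size_enum_ord big_mkord.
by apply: eq_bigl => j; rewrite (nth_map j) ?size_enum_ord // nth_ord_enum.
Qed.

Definition bit b j := odd (j %/ 2 ^ b).

Lemma bit0n b : bit b 0 = false.
Proof. by rewrite /bit div0n. Qed.

Lemma bit_exp2 b i : bit b (2 ^ i) = (b == i).
Proof.
rewrite /bit; case: (ltngtP b i) => [lt_bi|lt_ib|->]; last by rewrite divnn expn_gt0.
  rewrite -(subnK (ltnW lt_bi)) expnD mulnK ?expn_gt0 // oddX /=.
  by rewrite -subn_gt0 in lt_bi; case: (i - b) lt_bi.
by rewrite divn_small // ltn_exp2l.
Qed.

Lemma bit_exp2D b M j : b < M -> bit b (2 ^ M + j) = bit b j.
Proof.
move=> lt_bM; rewrite /bit -(subnK (ltnW lt_bM)) expnD addnC divnDMl ?expn_gt0 //.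
by rewrite oddD oddX subn_eq0 leqNgt lt_bM addbF.
Qed.

Lemma bit_small M j : j < 2 ^ M -> bit M j = false.
Proof. by move=> lt_j; rewrite /bit divn_small. Qed.

Lemma bit_exp2D_top M j : j < 2 ^ M -> bit M (2 ^ M + j) = true.
Proof.
by move=> lt_j; rewrite /bit -{1}[2 ^ M]mul1n addnC divnDMl ?expn_gt0 // divn_small.
Qed.

Fixpoint from_bits (s : nat -> bool) (m : nat) : nat :=
  if m is m'.+1 then s 0 + (from_bits (fun b => s b.+1) m').*2 else 0.

Lemma from_bits_lt s m : from_bits s m < 2 ^ m.
Proof.
elim: m s => [//|m IHm] s /=; rewrite expnS mul2n.
by case: (s 0); rewrite ?ltn_Sdouble ?ltn_double.
Qed.

Lemma bit_from_bits s m b : b < m -> bit b (from_bits s m) = s b.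
Proof.
have bitS c n : bit c.+1 n = bit c n./2 by rewrite /bit expnS divnMA divn2.
elim: m s b => [//|m IHm] s [_|b lt_bm] /=.
  by rewrite /bit expn0 divn1 oddD odd_double addbF oddb.
by rewrite bitS half_bit_double IHm.
Qed.

Lemma RM_full m w : 0 < m -> RM m m w = (size w == 2 ^ m).
Proof. by case: m => //= m _; rewrite leqnn. Qed.

Lemma RM_cat r m u v : 0 < r <= m -> size u = 2 ^ m -> size v = 2 ^ m ->
  RM r m.+1 (u ++ v) = RM r m u && RM r.-1 m (xorseq u v).
Proof.
case: r => // r /= le_rm su sv; rewrite ltnS leqNgt le_rm /=.
by rewrite size_cat su sv expnS mul2n addnn eqxx take_size_cat // drop_size_cat.
Qed.

Lemma RM_size r m w : 0 < m -> RM r m w -> size w = 2 ^ m.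
Proof.
case: m => // m _ /=; case: ifP => _; first by case/orP=> /eqP ->; rewrite size_nseq.
by case: ifP => _; [move/eqP | case/and3P=> /eqP].
Qed.

Lemma cat_halves {m} {w : bitseq} : size w = 2 ^ m.+1 ->
  exists u v, [/\ w = u ++ v, size u = 2 ^ m & size v = 2 ^ m].
Proof.
move=> sw; have le_half : 2 ^ m <= size w by rewrite sw leq_exp2l.
exists (take (2 ^ m) w), (drop (2 ^ m) w).
by rewrite cat_take_drop size_takel // size_drop sw expnS mul2n -addnn addnK.
Qed.

Lemma RM_even_weightE m w : 0 < m ->
  RM m.-1 m w = (size w == 2 ^ m) && ~~ wparity xpredT w.
Proof.
elim: m w => [//|[|m] IHm] w _.
  by case: w => [|[] [|[] [|? ?]]].
case: (eqVneq (size w) (2 ^ m.+2)) => [sw|]; last first.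
  by apply: contraNF => /RM_size->.
have [u [v [-> su sv]]] := cat_halves sw.
rewrite -[m.+2.-1]/(m.+1) RM_cat ?su ?sv ?leqnn // RM_full // su eqxx.
by rewrite IHm // size_xorseq su sv minnn eqxx wparity_xor ?su ?sv // wparity_cat.
Qed.

Definition ext_hamming_checks m w :=
  ~~ wparity xpredT w && all (fun b => ~~ wparity (bit b) w) (iota 0 m).

Lemma ext_hamming_checks_cat m u v : size u = 2 ^ m -> size v = 2 ^ m ->
  ext_hamming_checks m.+1 (u ++ v) =
  ~~ wparity xpredT u && ext_hamming_checks m (xorseq u v).
Proof.
move=> su sv; rewrite /ext_hamming_checks -addn1 iotaD all_cat /= andbT.
rewrite !wparity_cat !wparity_xor ?su ?sv //.
have -> : wparity (bit m) u = false.
  rewrite (@eq_wparity _ (fun _ => false)) => [|j]; last by rewrite inE su => /bit_small.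
  by elim: (u) => //= x w ->; rewrite andbF.
rewrite (@eq_wparity _ xpredT) ?sv => [|j /bit_exp2D_top//].
rewrite (@eq_in_all _ _ (fun b => ~~ wparity (bit b) (xorseq u v))); last first.
  move=> b; rewrite mem_iota /= => lt_bm; rewrite wparity_cat wparity_xor ?su ?sv //.
  by rewrite (@eq_wparity _ (bit b)) // => j _; rewrite bit_exp2D.
by case: (wparity _ u); case: (wparity _ v); case: (all _ _).
Qed.

Lemma RM_m2E m w : 0 < m -> RM_m2 m w = (size w == 2 ^ m) && ext_hamming_checks m w.
Proof.
have RM_m2S k : RM_m2 k.+2 = RM k k.+2 by rewrite /RM_m2 -[k.+2 == 1]/false !subSS subn0.
elim: m w => [//|[|[|m]] IHm] w _.
- by rewrite /RM_m2 /ext_hamming_checks /=; case: w => [|[] [|[] [|? ?]]].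
- by rewrite /RM_m2 /ext_hamming_checks /=; case: w => [|[] [|[] [|[] [|[] [|? ?]]]]].
case: (eqVneq (size w) (2 ^ m.+3)) => [sw|]; last first.
  by apply: contraNF => /RM_size->.
have [u [v [-> su sv]]] := cat_halves sw.
rewrite RM_m2S RM_cat ?su ?sv ?leqnSn // -[m.+1.-1]/m -RM_m2S IHm //.
rewrite -[m.+1]/(m.+2.-1) RM_even_weightE // size_xorseq su sv minnn eqxx.
by rewrite -andbA ext_hamming_checks_cat.
Qed.

Lemma size_rowseq t n (M : 'M[bool]_(t, n)) i : size (rowseq M i) = n.
Proof. by rewrite size_map size_enum_ord. Qed.

Section RowChecks.

Variables (m t : nat) (c : 'M[bool]_(t, 2 ^ m)) (i : 'I_t).
Hypothesis m_gt0 : 0 < m.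

Lemma RM_full_rowseq : RM m m (rowseq c i).
Proof. by rewrite RM_full // size_rowseq. Qed.

Lemma RM_even_weight_rowseq :
  RM m.-1 m (rowseq c i) = ~~ \big[addb/false]_(j | c i j) true.
Proof. by rewrite RM_even_weightE // size_rowseq eqxx wparity_rowseq. Qed.

Lemma RM_m2_rowseq :
  RM_m2 m (rowseq c i) = ~~ (\big[addb/false]_(j | c i j) true)
    && all (fun b => ~~ \big[addb/false]_(j | c i j) bit b j) (iota 0 m).
Proof.
rewrite RM_m2E // size_rowseq eqxx /ext_hamming_checks wparity_rowseq.
by under eq_all do rewrite wparity_rowseq.
Qed.

End RowChecks.

Section XorSums.

Variable T : finType.
Implicit Types (P Q : pred T) (f : T -> bool).

Lemma big_addb_xor P Q f :
  \big[addb/false]_(j | P j (+) Q j) f j =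
  \big[addb/false]_(j | P j) f j (+) \big[addb/false]_(j | Q j) f j.
Proof.
rewrite big_mkcond [in RHS]big_mkcond [X in _ (+) X]big_mkcond -big_split.
by apply: eq_bigr => j _; case: (P j); case: (Q j); case: (f j).
Qed.

Lemma big_addb_bigxor (I : finType) (A : pred I) (E : I -> pred T) f :
  \big[addb/false]_(j | \big[addb/false]_(i | A i) E i j) f j =
  \big[addb/false]_(i | A i) \big[addb/false]_(j | E i j) f j.
Proof.
rewrite big_mkcond.
transitivity (\big[addb/false]_j \big[addb/false]_(i | A i) (E i j && f j)).
  by apply: eq_bigr => j _; rewrite -big_distrl.
by rewrite exchange_big /=; apply: eq_bigr => i _; rewrite [RHS]big_mkcond.
Qed.

Lemma big_addb_witness (I : finType) (P : pred I) (F : I -> bool) :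
  \big[addb/false]_(i | P i) F i -> exists2 i, P i & F i.
Proof.
move=> sumF; apply/exists_inP; apply: contraTT sumF => /exists_inPn noF.
by rewrite big1 // => i /noF /negbTE.
Qed.

End XorSums.

Lemma big_addb_val1 n a (f : nat -> bool) : a < n ->
  \big[addb/false]_(j < n | j == a :> nat) f j = f a.
Proof. by move=> lt_an; rewrite (big_pred1 (Ordinal lt_an)). Qed.

Lemma big_addb_eq (I : finType) (a : pred I) (b : I) :
  \big[addb/false]_(i | a i) (b == i) = a b.
Proof.
case ab: (a b).
  by rewrite (bigD1 b) //= eqxx big1 // => i /andP[_ /negbTE]; rewrite eq_sym.
by rewrite big1 // => i ai; apply: contraTF ai => /eqP <-; rewrite ab.
Qed.

Section EvenUnitSyndromes.

Variables (T : finType) (k : nat) (E phi : 'I_k -> pred T) (j0 : T).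
Hypothesis E_even : forall i, \big[addb/false]_(j | E i j) true = false.
Hypothesis E_unit : forall i b, \big[addb/false]_(j | E i j) phi b j = (b == i).

Definition xor_comb (ae : {ffun 'I_k -> bool} * bool) : {ffun T -> bool} :=
  [ffun j => \big[addb/false]_(i | ae.1 i) E i j (+) (ae.2 && (j == j0))].

Lemma big_addb_xor_comb ae f :
  \big[addb/false]_(j | xor_comb ae j) f j =
  \big[addb/false]_(i | ae.1 i) \big[addb/false]_(j | E i j) f j (+) (ae.2 && f j0).
Proof.
under eq_bigl do rewrite ffunE.
rewrite big_addb_xor big_addb_bigxor; congr (_ (+) _).
by case: ae.2; rewrite ?big_pred1_eq ?big_pred0.
Qed.

Lemma xor_comb_inj : injective xor_comb.
Proof.
move=> [a e] [a' e'] eq_comb.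
have syndromes_eq f : \big[addb/false]_(j | xor_comb (a, e) j) f j =
                      \big[addb/false]_(j | xor_comb (a', e') j) f j.
  by rewrite eq_comb.
have eq_e : e = e'.
  have := syndromes_eq xpredT; rewrite !big_addb_xor_comb /=.
  by rewrite !big1 ?andbT // => i _; rewrite E_even.
congr (_, _) => //; apply/ffunP => b.
have := syndromes_eq (phi b); rewrite !big_addb_xor_comb /= eq_e => /addIb.
under eq_bigr do rewrite E_unit; under [in RHS]eq_bigr do rewrite E_unit.
by rewrite !big_addb_eq.
Qed.

Lemma card_gt_even_unit_syndromes (J : {set T}) :
  j0 \in J -> (forall i j, E i j -> j \in J) -> k < #|J|.
Proof.
move=> J_j0 EJ.
have comb_supp : xor_comb @: setT \subset pffun_on false J predT.
  apply/subsetP => _ /imsetP[[a e] _ ->]; apply/pffun_onP; split=> //.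
  apply/subsetP => j; rewrite inE ffunE /= eqbF_neg negbK.
  case: (boolP (e && (j == j0))) => [/andP[_ /eqP->] _ //|_].
  by rewrite addbF => /big_addb_witness[i _ /EJ].
have := subset_leq_card comb_supp.
rewrite card_imset; last exact: xor_comb_inj.
rewrite cardsT card_prod card_ffun card_bool card_ord card_pffun_on.
by rewrite [#|predT|]card_bool -expnSr leq_exp2l.
Qed.

End EvenUnitSyndromes.

Lemma card_val_in n (s : seq nat) : #|[set j : 'I_n | val j \in s]| <= size s.
Proof.
rewrite cardE -(size_map val); apply: uniq_leq_size.
  by rewrite map_inj_uniq ?enum_uniq //; apply: val_inj.
by move=> x /mapP[j]; rewrite mem_enum inE => s_j ->.
Qed.

Section Flip.

Variables (t n : nat) (v : 'M[bool]_(t, n)).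

Definition flip_mx (E : 'I_t -> pred 'I_n) : 'M[bool]_(t, n) :=
  \matrix_(i, j) (v i j (+) E i j).

Lemma d_t_flip_le (E : 'I_t -> pred 'I_n) (s : seq nat) :
  (forall i j, E i j -> val j \in s) -> d_t v (flip_mx E) <= size s.
Proof.
move=> E_s; apply: leq_trans (card_val_in n s); apply: subset_leq_card.
by apply/subsetP => j; rewrite !inE => /existsP[i]; rewrite !mxE addKb => /E_s.
Qed.

Lemma big_addb_flip (E : 'I_t -> pred 'I_n) i (f : 'I_n -> bool) :
  \big[addb/false]_(j | flip_mx E i j) f j =
  \big[addb/false]_(j | v i j) f j (+) \big[addb/false]_(j | E i j) f j.
Proof. by under eq_bigl do rewrite mxE; rewrite big_addb_xor. Qed.

End Flip.

Section CoveringRadii.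

Variables (m t : nat).
Hypothesis m_gt0 : 0 < m.

Lemma is_Rt_RM_full : is_Rt (RM m m) t (2 ^ m) 0.
Proof.
split=> // v; exists v; split=> [i|]; first exact: RM_full_rowseq.
rewrite /d_t /wt_t leqn0 cards_eq0; apply/eqP/setP => j; rewrite !inE.
by apply/negbTE/existsPn => i; rewrite mxE addbb.
Qed.

Lemma is_Rt_RM_even_weight : 0 < t -> is_Rt (RM m.-1 m) t (2 ^ m) 1.
Proof.
move=> t_gt0; split=> [v|rho covers_rho].
  pose p i := \big[addb/false]_(j | v i j) true.
  pose E i (j : 'I_(2 ^ m)) := p i && (j == 0 :> nat).
  have E_supp i j : E i j -> (j : nat) \in [:: 0] by case/andP=> _; rewrite inE.
  exists (flip_mx v E); split=> [i|]; last exact: (d_t_flip_le v E_supp).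
  rewrite RM_even_weight_rowseq // big_addb_flip /E -/(p i).
  by case: (p i) => /=; rewrite ?big_pred0_eq ?(big_addb_val1 xpredT) ?expn_gt0.
pose i0 : 'I_t := Ordinal t_gt0.
pose v : 'M[bool]_(t, 2 ^ m) := (\matrix_(i, j) (j == 0 :> nat))%R.
have [c [c_even]] := covers_rho v; apply: leq_trans.
have [j D_j _] : exists2 j, v i0 j (+) c i0 j & true.
  apply: big_addb_witness; rewrite big_addb_xor.
  have := c_even i0; rewrite RM_even_weight_rowseq // => /negbTE->.
  by under eq_bigl do rewrite mxE; rewrite (big_addb_val1 xpredT) ?expn_gt0.
rewrite card_gt0; apply/set0Pn; exists j; rewrite inE; apply/existsP.
by exists i0; rewrite mxE.
Qed.

Lemma RM_m2_rowseq_flip (v : 'M[bool]_(t, 2 ^ m)) (E : 'I_t -> pred 'I_(2 ^ m)) :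
  (forall i, \big[addb/false]_(j | E i j) true = \big[addb/false]_(j | v i j) true) ->
  (forall i b, b < m ->
     \big[addb/false]_(j | E i j) bit b j = \big[addb/false]_(j | v i j) bit b j) ->
  forall i, RM_m2 m (rowseq (flip_mx v E) i).
Proof.
move=> E_par E_bit i; rewrite RM_m2_rowseq // big_addb_flip E_par addbb /=.
apply/allP => b; rewrite mem_iota => /andP[_ lt_bm].
by rewrite big_addb_flip E_bit ?addbb.
Qed.

Lemma covers_RM_m2_rows : covers (RM_m2 m) t (2 ^ m) t.+1.
Proof.
move=> v; pose p i := \big[addb/false]_(j | v i j) true.
pose x i := from_bits (fun b => \big[addb/false]_(j | v i j) bit b j) m.
pose E i (j : 'I_(2 ^ m)) := (j == x i :> nat) (+) (~~ p i && (j == 0 :> nat)).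
have E_syn i (f : nat -> bool) :
    \big[addb/false]_(j | E i j) f j = f (x i) (+) (~~ p i && f 0).
  rewrite big_addb_xor big_addb_val1 ?from_bits_lt //.
  by case: (p i) => /=; rewrite ?big_pred0_eq ?big_addb_val1 ?expn_gt0.
exists (flip_mx v E); split.
  apply: RM_m2_rowseq_flip => [i|i b lt_bm].
    by rewrite (E_syn i xpredT) -/(p i); case: (p i).
  by rewrite E_syn bit_from_bits // bit0n andbF addbF.
have E_supp i j : E i j -> (j : nat) \in 0 :: codom x.
  case: (boolP (j == x i :> nat)) => [/eqP-> _|/negbTE not_xi].
    by rewrite inE codom_f orbT.
  by rewrite /E not_xi => /andP[_ /eqP->]; rewrite inE eqxx.
by apply: leq_trans (d_t_flip_le v E_supp) _; rewrite /= size_codom card_ord.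
Qed.

Lemma covers_RM_m2_bits : covers (RM_m2 m) t (2 ^ m) m.+1.
Proof.
move=> v; pose s i (b : 'I_m) := \big[addb/false]_(j | v i j) bit b j.
pose q i := \big[addb/false]_(j | v i j) true (+) \big[addb/false]_(b | s i b) true.
pose E i (j : 'I_(2 ^ m)) :=
  \big[addb/false]_(b | s i b) (j == 2 ^ b :> nat) (+) (q i && (j == 0 :> nat)).
have E_syn i (f : nat -> bool) :
    \big[addb/false]_(j | E i j) f j =
    \big[addb/false]_(b | s i b) f (2 ^ b) (+) (q i && f 0).
  rewrite big_addb_xor big_addb_bigxor; congr (_ (+) _).
    by apply: eq_bigr => b _; apply: big_addb_val1; rewrite ltn_exp2l.
  by case: (q i) => /=; rewrite ?big_pred0_eq ?big_addb_val1 ?expn_gt0.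
exists (flip_mx v E); split.
  apply: RM_m2_rowseq_flip => [i|i b lt_bm].
    by rewrite (E_syn i xpredT) /= andbT addbCA addbb addbF.
  rewrite E_syn; under eq_bigr do rewrite bit_exp2.
  by rewrite (big_addb_eq _ (Ordinal lt_bm)) bit0n andbF addbF.
have E_supp i j : E i j -> (j : nat) \in 0 :: codom (fun b : 'I_m => 2 ^ b).
  case: (boolP (q i && (j == 0 :> nat))) => [/andP[_ /eqP->] _|/negbTE not_0].
    by rewrite inE eqxx.
  by rewrite /E not_0 addbF => /big_addb_witness[b _ /eqP->]; rewrite inE codom_f orbT.
by apply: leq_trans (d_t_flip_le v E_supp) _; rewrite /= size_codom card_ord.
Qed.

Lemma RM_m2_covering_radius_ge : 0 < t ->
  forall rho, covers (RM_m2 m) t (2 ^ m) rho -> (minn t m).+1 <= rho.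
Proof.
move=> t_gt0 rho covers_rho; set k := minn t m.
have le_kt : k <= t := geq_minl t m.
have le_km : k <= m := geq_minr t m.
pose v : 'M[bool]_(t, 2 ^ m) :=
  (\matrix_(i, j) ((i < k)%N && ((j == 0 :> nat) (+) (j == 2 ^ i :> nat)%N)))%R.
have v_syn (i : 'I_k) (f : nat -> bool) :
    \big[addb/false]_(j | v (widen_ord le_kt i) j) f j = f 0 (+) f (2 ^ i).
  under eq_bigl do rewrite mxE /= ltn_ord.
  rewrite big_addb_xor !big_addb_val1 ?expn_gt0 // ltn_exp2l //.
  exact: leq_trans (ltn_ord i) le_km.
have [c [c_code]] := covers_rho v; apply: leq_trans.
pose D (i : 'I_k) j := v (widen_ord le_kt i) j (+) c (widen_ord le_kt i) j.
have D_even i : \big[addb/false]_(j | D i j) true = false.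
  rewrite big_addb_xor (v_syn i xpredT).
  by have := c_code (widen_ord le_kt i); rewrite RM_m2_rowseq // => /andP[/negbTE-> _].
have D_unit i (b : 'I_k) : \big[addb/false]_(j | D i j) bit b j = (b == i).
  rewrite big_addb_xor v_syn bit0n bit_exp2.
  have := c_code (widen_ord le_kt i); rewrite RM_m2_rowseq // => /andP[_ /allP/(_ b)].
  by rewrite mem_iota (leq_trans (ltn_ord b) le_km) => /(_ isT)/negbTE->; rewrite addbF.
have k_gt0 : 0 < k by rewrite leq_min t_gt0 m_gt0.
have [j0 D_j0 _] : exists2 j, D (Ordinal k_gt0) j & bit (Ordinal k_gt0) j.
  by apply: big_addb_witness; rewrite D_unit eqxx.
rewrite /d_t /wt_t; set J := [set _ | _].
have D_supp i j : D i j -> j \in J.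
  by move=> D_ij; rewrite inE; apply/existsP; exists (widen_ord le_kt i); rewrite mxE.
exact: (card_gt_even_unit_syndromes D_even D_unit (D_supp _ _ D_j0) D_supp).
Qed.

End CoveringRadii.

Theorem proposition13 (m t : nat) : 0 < m -> 0 < t ->
  [/\ is_Rt (RM m m) t (2 ^ m) 0,
      is_Rt (RM m.-1 m) t (2 ^ m) 1
    & is_Rt (RM_m2 m) t (2 ^ m) (minn t m).+1].
Proof.
move=> m_gt0 t_gt0; split; [exact: is_Rt_RM_full | exact: is_Rt_RM_even_weight |].
split; last exact: RM_m2_covering_radius_ge.
by case: leqP => _; [exact: covers_RM_m2_rows | exact: covers_RM_m2_bits].
Qed.
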